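(* For all integers $m<0$ and $n\geq 1$, \[ N(\leq m+1,n)-M(\leq m,n)=q(-m-1,n)-p(m+2,n). \]
   Context: For a partition $\lambda$, $\operatorname{rank}(\lambda)$ is its largest part minus its number of parts. $\operatorname{crank}(\lambda)$ is the largest part of $\lambda$ if $\lambda$ contains no part equal to $1$; otherwise it is the number of parts larger than the number of ones minus the number of ones. For $n\geq1$, $N(m,n)$ is the number of partitions of $n$ with rank $m$. For $n>1$, $M(m,n)$ is the number of partitions of $n$ with crank $m$. For $n=1$ one sets $M(0,1)=-1$, $M(\pm1,1)=1$ and $M(m,1)=0$ otherwise. The cumulative functions are $N(\leq m,n)=\sum_{r\leq m}N(r,n)$ and $M(\leq m,n)=\sum_{r\leq m}M(r,n)$. Define $p(m,n)=\sum_{r\geq m}N(r,n)$, the number of partitions of $n$ with rank at least $m$. For a partition $\lambda=(\lambda_1\geq\cdots\geq\lambda_\ell)$, its rank-set is the infinite sequence $[-\lambda_1,1-\lambda_2,\ldots,j-\lambda_{j+1},\ldots,\ell-1-\lambda_\ell,\ell,\ell+1,\ldots]$. Then $q(m,n)$ is the number of partitions of $n$ whose rank-set contains $m$. *)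

From mathcomp Require Import all_boot all_order all_algebra.
Set Implicit Arguments. Unset Strict Implicit. Unset Printing Implicit Defensive.
Import Order.TTheory GRing.Theory Num.Theory.
Local Open Scope ring_scope.

Definition is_partition (n : nat) (s : seq nat) : bool :=
  [&& sorted geq s, all (fun x => 0 < x)%N s & sumn s == n].

(* Number of partitions of n satisfying P.  Every partition of n has at most
   n parts, each at most n, so it is counted exactly once, as the tuple of
   length (size s) with entries in 'I_n.+1. *)
Definition pcount (n : nat) (P : seq nat -> bool) : nat :=
  (\sum_(k < n.+1)
     #|[pred t : k.-tuple 'I_n.+1 |
        is_partition n [seq val i | i <- t] && P [seq val i | i <- t]]|)%N.

Definition largest (s : seq nat) : nat := head 0%N s.

Definition rank (s : seq nat) : int := (largest s)%:Z - (size s)%:Z.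

Definition omega (s : seq nat) : nat := count (fun x => x == 1%N) s.

Definition crank (s : seq nat) : int :=
  if omega s == 0%N then (largest s)%:Z
  else (count (fun x => omega s < x)%N s)%:Z - (omega s)%:Z.

Definition Nrank (m : int) (n : nat) : int :=
  (pcount n (fun s => rank s == m))%:Z.

Definition Mcrank (m : int) (n : nat) : int :=
  if n == 1%N then
    (if m == 0 then -1 else if (m == 1) || (m == -1) then 1 else 0)
  else (pcount n (fun s => crank s == m))%:Z.

(* Cumulative function sum_{r <= m} f r n.  For n >= 1 both N(r,n) and
   M(r,n) vanish for r < -n, so the sum is over -n <= r <= m. *)
Definition cumul (f : int -> nat -> int) (m : int) (n : nat) : int :=
  if m + n%:Z < 0 then 0
  else \sum_(i < (absz (m + n%:Z)).+1) f (m - i%:Z) n.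

Definition Nle (m : int) (n : nat) : int := cumul Nrank m n.
Definition Mle (m : int) (n : nat) : int := cumul Mcrank m n.

Definition prank (m : int) (n : nat) : int :=
  (pcount n (fun s => m <= rank s))%:Z.

Definition in_rank_set (m : int) (s : seq nat) : bool :=
  has (fun j => (j%:Z - (nth 0%N s j)%:Z == m)) (iota 0 (size s))
  || ((size s)%:Z <= m).

Definition qrs (m : int) (n : nat) : int :=
  (pcount n (in_rank_set m))%:Z.

From mathcomp Require Import all_boot all_order all_algebra zify.
Set Implicit Arguments. Unset Strict Implicit. Unset Printing Implicit Defensive.

(* Since N(<= m+1, n) + p(m+2, n) and q(-m-1, n) + #{l : -m-1 notin rank-set l}
   both count all partitions of n, the identity amounts to M(<= m, n) being the
   number of partitions whose rank-set misses -m-1.  Write h = -m > 0.  By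
   Dyson's theorem the rank-set of the conjugate partition is the complement of
   {-1-x : x in the rank-set}, so conjugation turns these into the partitions
   whose rank-set contains -h, i.e. that have a part l_(j+1) = j + h.  Those are
   in bijection with the partitions of crank <= -h, i.e. with at least h more
   ones than parts exceeding the number of ones: if t is the side of the largest
   t x (t+h) Durfee rectangle of the non-one parts, merge t + h ones into a new
   part t + h placed in row t + 1; conversely, break the first part of the form
   l_(j+1) = j + h into ones. *)

Local Notation geq_trans := (rev_trans leq_trans).

Definition tuple_seqs n k : seq (seq nat) :=
  [seq [seq val i | i <- tval t] | t <- enum {: k.-tuple 'I_n.+1}].

Definition partitions n : seq (seq nat) :=
  filter (is_partition n) (flatten [seq tuple_seqs n k | k <- iota 0 n.+1]).

Lemma size_tuple_seqs n k s : s \in tuple_seqs n k -> size s = k.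
Proof. by case/mapP=> t _ ->; rewrite size_map size_tuple. Qed.

Lemma tuple_seqs_uniq n k : uniq (tuple_seqs n k).
Proof.
rewrite map_inj_uniq ?enum_uniq // => t1 t2 /(inj_map val_inj) eq_t.
exact: val_inj.
Qed.

Lemma partitions_uniq n : uniq (partitions n).
Proof.
apply: filter_uniq; elim: (iota 0 n.+1) (iota_uniq 0 n.+1) => //= k ks IHks.
case/andP=> k_ks /IHks ks_uniq; rewrite cat_uniq tuple_seqs_uniq ks_uniq andbT.
apply/hasPn => s /flattenP [_ /mapP [k' k'_ks ->]] /size_tuple_seqs eq_k'.
by apply: contraNN k_ks => /size_tuple_seqs <-; rewrite eq_k'.
Qed.

Lemma partition_size n s : is_partition n s -> size s <= n.
Proof.
case/and3P=> _ + /eqP <-; elim: s => //= x s IHs /andP[x_gt0 /IHs]; lia.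
Qed.

Lemma partition_part n s x : is_partition n s -> x \in s -> x <= n.
Proof.
case/and3P=> _ _ /eqP <-; elim: s => //= y s IHs; rewrite in_cons.
by case/orP=> [/eqP ->|/IHs]; lia.
Qed.

Lemma mem_partitions n s : (s \in partitions n) = is_partition n s.
Proof.
rewrite mem_filter andb_idr // => s_part; apply/flatten_mapP.
exists (size s); first by rewrite mem_iota ltnS partition_size.
have size_ord : size (map (@inord n) s) = size s by rewrite size_map.
apply/mapP; exists (tcast size_ord (in_tuple (map (@inord n) s))).
  by rewrite mem_enum.
rewrite val_tcast /= -map_comp map_id_in // => x x_s /=.
by rewrite inordK // ltnS (partition_part s_part).
Qed.

Lemma pcountE n P : pcount n P = count P (partitions n).
Proof.
rewrite /pcount /partitions count_filter count_flatten -map_comp sumnE big_map.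
rewrite -(big_mkord xpredT (fun k => #|[pred t : k.-tuple 'I_n.+1 |
  is_partition n [seq val i | i <- t] && P [seq val i | i <- t]]|)).
rewrite /index_iota subn0; apply: eq_bigr => k _.
rewrite /tuple_seqs /= count_map cardE /enum_mem size_filter count_filter.
by apply: eq_count => t /=; rewrite !inE andbT andbC.
Qed.

Lemma eq_pcount n (P Q : pred (seq nat)) :
  (forall s, is_partition n s -> P s = Q s) -> pcount n P = pcount n Q.
Proof.
move=> eqPQ; rewrite !pcountE; apply: eq_in_count => s.
by rewrite mem_partitions => /eqPQ.
Qed.

Lemma pcount_pred0 n : pcount n pred0 = 0.
Proof. by rewrite pcountE count_pred0. Qed.

Lemma pcountD n (P Q R : pred (seq nat)) :
  (forall s, P s + Q s = R s) -> pcount n P + pcount n Q = pcount n R.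
Proof.
by move=> PQR; rewrite !pcountE; elim: (partitions n) => //= s l <-; rewrite -PQR; lia.
Qed.

Lemma pcount_bij n (P Q : pred (seq nat)) (f g : seq nat -> seq nat) :
  (forall s, is_partition n s -> P s ->
     [/\ is_partition n (f s), Q (f s) & g (f s) = s]) ->
  (forall u, is_partition n u -> Q u ->
     [/\ is_partition n (g u), P (g u) & f (g u) = u]) ->
  pcount n P = pcount n Q.
Proof.
move=> fP gQ; rewrite !pcountE -!size_filter -(size_map f).
apply/perm_size/uniq_perm.
- rewrite map_inj_in_uniq; first exact: filter_uniq (partitions_uniq n).
  move=> s1 s2; rewrite !(mem_filter P) !mem_partitions.
  move=> /andP[Ps1 /fP /(_ Ps1) [_ _ fK1]] /andP[Ps2 /fP /(_ Ps2) [_ _ fK2]] eq_f.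
  by rewrite -fK1 eq_f fK2.
- exact: filter_uniq (partitions_uniq n).
move=> u; rewrite (mem_filter Q) mem_partitions.
apply/mapP/andP => [[s]|[Qu pu]].
  by rewrite (mem_filter P) mem_partitions => /andP[Ps /fP /(_ Ps) [? ? _]] ->.
have [pg Pg gK] := gQ u pu Qu.
by exists (g u); rewrite ?(mem_filter P) ?mem_partitions ?Pg.
Qed.

Lemma sorted_geq_nth s i j :
  sorted geq s -> i <= j -> nth 0 s j <= nth 0 s i.
Proof.
move=> ss le_ij; case: (ltnP j (size s)) => [lt_js|le_sj]; last by rewrite nth_default.
by apply: (sorted_leq_nth geq_trans leqnn) => //; rewrite inE (leq_ltn_trans le_ij).
Qed.

Lemma sorted_geq_head s x : sorted geq s -> x \in s -> x <= head 0 s.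
Proof. by move=> ss /(nthP 0) [i _ <-]; rewrite -nth0 sorted_geq_nth. Qed.

Lemma sorted_geq_filter_split c s : sorted geq s ->
  s = filter (fun x => c < x) s ++ filter (fun x => x <= c) s.
Proof.
elim: s => //= x s IHs xs; have ss := path_sorted xs.
have /allP below_x := order_path_min geq_trans xs.
case: ltnP => [lt_cx|le_xc] /=; first by rewrite -IHs.
rewrite (@eq_in_filter _ _ pred0) ?filter_pred0; last by move=> y /below_x /=; lia.
by rewrite (@eq_in_filter _ _ predT) ?filter_predT // => y /below_x /=; lia.
Qed.

Lemma count_gt_nth s i j :
  sorted geq s -> (i < count (fun x => j < x) s) = (j < nth 0 s i).
Proof.
move=> ss; rewrite {2}(sorted_geq_filter_split j ss) nth_cat -size_filter.
case: ltnP => [lt_ic|le_ci].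
  by have := mem_nth 0 lt_ic; rewrite mem_filter => /andP[].
set c := size _ in le_ci *; set G := filter (fun x => x <= j) s.
case: (ltnP (i - c) (size G)) => [lt_iG|le_Gi]; last by rewrite nth_default.
by have := mem_nth 0 lt_iG; rewrite mem_filter leqNgt => /andP[/negbTE].
Qed.

Lemma sorted_geq_insert a x b :
  sorted geq (a ++ b) -> all (fun y => x <= y) a -> all (fun y => y <= x) b ->
  sorted geq (a ++ x :: b).
Proof.
rewrite !(sorted_pairwise geq_trans) !pairwise_cat pairwise_cons allrel_consr.
by case/and3P=> -> -> -> -> ->.
Qed.

Lemma sorted_geq_cat_ones s r :
  sorted geq s -> all (fun x => 0 < x) s -> sorted geq (s ++ nseq r 1).
Proof.
rewrite !(sorted_pairwise geq_trans) pairwise_cat => -> /allP s_pos.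
apply/andP; split; first by apply/allrelP => x y /s_pos x_pos /nseqP [-> _].
by elim: r => //= r ->; rewrite all_nseq orbT.
Qed.

Lemma sorted_geq_split_at u i x :
  sorted geq u -> nth 0 u i = x -> 0 < x ->
  [/\ u = take i u ++ x :: drop i.+1 u, size (take i u) = i,
      all (fun y => x <= y) (take i u) & all (fun y => y <= x) (drop i.+1 u)].
Proof.
move=> su u_i x_gt0.
have lt_iu : i < size u by rewrite ltnNge; apply/negP => /(nth_default 0); lia.
split; first by rewrite -u_i -drop_nth // cat_take_drop.
- by rewrite size_takel // ltnW.
- apply/(all_nthP 0) => j; rewrite size_takel ?(ltnW lt_iu) // => lt_ji.
  by rewrite nth_take // -u_i sorted_geq_nth // ltnW.
by apply/(all_nthP 0) => j _; rewrite nth_drop -u_i sorted_geq_nth //; lia.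
Qed.

Definition nonones (s : seq nat) : seq nat := filter (fun x => 1 < x) s.

Lemma split_ones s : sorted geq s -> all (fun x => 0 < x) s ->
  s = nonones s ++ nseq (omega s) 1.
Proof.
move=> ss /allP s_pos; rewrite {1}(sorted_geq_filter_split 1 ss); congr (_ ++ _).
have -> : filter (fun x => x <= 1) s = filter (pred1 1) s.
  by apply: eq_in_filter => x /s_pos /=; lia.
by move: (filter_all (pred1 1) s) => /all_pred1P {1}->; rewrite size_filter.
Qed.

Lemma count_iota_ltn x n : x <= n -> count (fun j => j < x) (iota 0 n) = x.
Proof. by move=> le_xn; rewrite -size_filter (filter_iota_ltn 0 le_xn) size_iota. Qed.

Definition conjugate (s : seq nat) : seq nat :=
  mkseq (fun j => count (fun x => j < x) s) (head 0 s).

Lemma nth_conjugate s j :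
  sorted geq s -> nth 0 (conjugate s) j = count (fun x => j < x) s.
Proof.
move=> ss; case: (ltnP j (head 0 s)) => [lt_jh|le_hj]; first by rewrite nth_mkseq.
rewrite nth_default ?size_mkseq // (@eq_in_count _ _ pred0) ?count_pred0 //.
by move=> x /(sorted_geq_head ss) /=; lia.
Qed.

Lemma conjugate_sorted s : sorted geq (conjugate s).
Proof.
apply: (homo_sorted (e := leq)); last exact: iota_sorted.
by move=> i j le_ij; apply: sub_count => x /=; apply: leq_ltn_trans.
Qed.

Lemma conjugate_pos s : all (fun x => 0 < x) (conjugate s).
Proof.
apply/allP => y /mapP [j]; rewrite mem_iota => /andP[_ lt_jh] ->.
rewrite -has_count; apply/hasP; exists (head 0 s) => //.
by case: s lt_jh => //= x s _; rewrite mem_head.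
Qed.

Lemma sumn_conjugate s : sorted geq s -> sumn (conjugate s) = sumn s.
Proof.
move=> ss; rewrite /conjugate !sumnE big_map.
under eq_bigr do rewrite -sumn_count sumnE big_map.
rewrite exchange_big; apply: eq_big_seq => x xs /=.
have := sumn_count (fun j => j < x) (iota 0 (head 0 s)).
by rewrite sumnE big_map count_iota_ltn // (sorted_geq_head ss).
Qed.

Lemma conjugateK s :
  sorted geq s -> all (fun x => 0 < x) s -> conjugate (conjugate s) = s.
Proof.
move=> ss s_pos.
have size_cc : size (conjugate (conjugate s)) = size s.
  by rewrite size_mkseq -nth0 nth_conjugate //; apply/eqP; rewrite -all_count.
apply: (eq_from_nth (x0 := 0) size_cc) => i _.
rewrite nth_conjugate ?conjugate_sorted // count_map.
rewrite (eq_count (a2 := fun j => j < nth 0 s i)) => [|j]; last exact: count_gt_nth.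
by rewrite count_iota_ltn // -nth0 sorted_geq_nth.
Qed.

Lemma is_partition_conjugate n s :
  is_partition n s -> is_partition n (conjugate s).
Proof.
case/and3P=> ss s_pos sum_s.
by rewrite /is_partition conjugate_sorted conjugate_pos sumn_conjugate.
Qed.

Lemma pcount_conjugate n (P : pred (seq nat)) :
  pcount n (fun s => P (conjugate s)) = pcount n P.
Proof.
apply: (pcount_bij (f := conjugate) (g := conjugate)) => s s_part;
  have /and3P [ss s_pos _] := s_part;
  by rewrite is_partition_conjugate // conjugateK.
Qed.

Lemma in_rank_setP (m : int) (s : seq nat) :
  reflect (exists i : nat, (i%:Z - (nth 0%N s i)%:Z = m)%R) (in_rank_set m s).
Proof.
apply: (iffP orP) => [[/hasP [j _ /eqP <-] | le_sm] | [i <-]]; first by exists j.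
  by exists (absz m); rewrite nth_default; lia.
case: (ltnP i (size s)) => [lt_is | le_si]; last by right; rewrite nth_default //; lia.
by left; apply/hasP; exists i; rewrite ?mem_iota.
Qed.

Lemma in_rank_set_conjugate_nat (k : nat) (s : seq nat) : sorted geq s ->
  in_rank_set (- k%:Z - 1)%R (conjugate s) = ~~ in_rank_set k s.
Proof.
move=> ss.
have conjugate_hit j :
    (j%:Z - (nth 0%N (conjugate s) j)%:Z = - k%:Z - 1)%R <->
    j < nth 0 s (j + k) /\ nth 0 s (j + k).+1 <= j.
  by rewrite nth_conjugate // (leqNgt (nth _ _ _)) -!(count_gt_nth _ _ ss); split; lia.
apply/in_rank_setP/negP => [[j /conjugate_hit [lt_j le_j]] /in_rank_setP [i hit_i]|].
  case: (leqP i (j + k)) => [le_i|lt_i].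
    by have := sorted_geq_nth ss le_i; lia.
  by have := sorted_geq_nth ss lt_i; lia.
move=> no_hit.
have ex_above : exists i, nth 0 s i + k < i.
  exists (head 0 s + k).+1.
  by have := sorted_geq_nth ss (leq0n (head 0 s + k).+1); rewrite nth0; lia.
case: (ex_minnP ex_above) => i0 above_i0 min_i0.
have i0_gt0 : 0 < i0 by case: i0 above_i0 {min_i0}.
have not_above : i0.-1 <= nth 0 s i0.-1 + k.
  by rewrite leqNgt; apply/negP => /min_i0; lia.
have ne_i : i0.-1 != nth 0 s i0.-1 + k.
  by apply/eqP => eq_i; apply/no_hit/in_rank_setP; exists i0.-1; lia.
exists (i0.-1 - k); apply/conjugate_hit.
have -> : i0.-1 - k + k = i0.-1 by lia.
by rewrite prednK //; lia.
Qed.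

Lemma in_rank_set_conjugate (m : int) (s : seq nat) :
  sorted geq s -> all (fun x => 0 < x) s ->
  in_rank_set m (conjugate s) = ~~ in_rank_set (- m - 1)%R s.
Proof.
move=> ss s_pos; case: m => k.
  have := in_rank_set_conjugate_nat k (conjugate_sorted s).
  by rewrite conjugateK // => ->; rewrite negbK.
have -> : Negz k = (- k%:Z - 1)%R by rewrite NegzE; lia.
by rewrite in_rank_set_conjugate_nat //; congr (~~ in_rank_set _ s); lia.
Qed.

Lemma find_iota (p : pred nat) n t : t <= n -> (t < n -> p t) ->
  (forall j, j < t -> ~~ p j) -> find p (iota 0 n) = t.
Proof.
move=> le_tn p_t not_p; have le_fn : find p (iota 0 n) <= n.
  by rewrite -[X in _ <= X](size_iota 0) find_size.
case: (ltngtP (find p (iota 0 n)) t) => // [lt_ft|lt_tf].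
  have lt_fn := leq_trans lt_ft le_tn.
  have := @nth_find _ 0 p (iota 0 n); rewrite has_find size_iota nth_iota // add0n.
  by move=> /(_ lt_fn); rewrite (negbTE (not_p _ lt_ft)).
have lt_tn := leq_trans lt_tf le_fn.
by have := before_find 0 lt_tf; rewrite nth_iota // add0n p_t.
Qed.

(* For a partition [s], the side of the largest t x (t + h) Durfee rectangle. *)
Definition durfee_index h s :=
  find (fun j => nth 0 s j <= j + h) (iota 0 (size s)).

Lemma durfee_index_size h s : durfee_index h s <= size s.
Proof. by rewrite -[X in _ <= X](size_iota 0) find_size. Qed.

Lemma durfee_index_split h k (t := durfee_index h k) : sorted geq k ->
  all (fun x => t + h <= x) (take t k) && all (fun x => x <= t + h) (drop t k).
Proof.
move=> sk; have le_tk : t <= size k := durfee_index_size h k.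
have above j : j < t -> j + h < nth 0 k j.
  move=> lt_jt; have := before_find 0 lt_jt.
  by rewrite nth_iota ?add0n; [lia | exact: leq_trans lt_jt le_tk].
have at_t : nth 0 k t <= t + h.
  case: (ltnP t (size k)) => [lt_tk | le_kt]; last by rewrite nth_default.
  have := @nth_find _ 0 (fun j => nth 0 k j <= j + h) (iota 0 (size k)).
  by rewrite has_find size_iota nth_iota // add0n; apply.
apply/andP; split; apply/(all_nthP 0) => j.
  rewrite size_takel // => lt_jt; rewrite nth_take //.
  have lt_t : t - 1 < t by lia.
  have le_j : j <= t - 1 by lia.
  by have := above _ lt_t; have := sorted_geq_nth sk le_j; lia.
by rewrite nth_drop => _; have := sorted_geq_nth sk (leq_addr j t); lia.
Qed.

Lemma durfee_index_cat h a e :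
  all (fun x => size a + h <= x) a -> all (fun x => x <= size a + h) e ->
  durfee_index h (a ++ e) = size a.
Proof.
move=> /(all_nthP 0) above /(all_nthP 0) below.
apply: find_iota => [|lt_a|j lt_j]; first by rewrite size_cat leq_addr.
  by rewrite nth_cat ltnn subnn; apply: below; rewrite size_cat in lt_a; lia.
by rewrite nth_cat lt_j -ltnNge; have := above j lt_j; lia.
Qed.

Definition ones_to_part h s : seq nat :=
  let k := nonones s in let t := durfee_index h k in
  take t k ++ (t + h) :: drop t k ++ nseq (omega s - (t + h)) 1.

Definition part_to_ones h u : seq nat :=
  let i := durfee_index h u in take i u ++ drop i.+1 u ++ nseq (i + h) 1.

Section OnesToPart.

Variable h : nat.
Hypothesis h_gt0 : 0 < h.

Lemma ones_to_part_spec n s :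
  is_partition n s -> count (fun x => omega s < x) s + h <= omega s ->
  [/\ is_partition n (ones_to_part h s), in_rank_set (- h%:Z)%R (ones_to_part h s)
    & part_to_ones h (ones_to_part h s) = s].
Proof.
move=> /and3P [ss s_pos /eqP sum_s] crank_s.
set k := nonones s; set w := omega s; set t := durfee_index h k.
have sk : sorted geq k := sorted_filter geq_trans _ ss.
have k_pos : all (fun x => 0 < x) k by apply: sub_all (filter_all _ _) => x /ltnW.
have s_split : s = k ++ nseq w 1 := split_ones ss s_pos.
have /andP [above below] := durfee_index_split h sk; rewrite -/t in above below.
have size_t : size (take t k) = t := size_takel (durfee_index_size h k).
(* Otherwise the t rows of the rectangle all exceed w, against the crank bound. *)
have le_tw : t + h <= w.
  rewrite leqNgt; apply/negP => lt_wt.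
  have count_t : count (fun x => w < x) (take t k) = t.
    apply/eqP; rewrite -[X in _ == X]size_t -all_count.
    by apply: sub_all above => x /=; lia.
  move: crank_s; rewrite -/w {1}s_split -(cat_take_drop t k) -catA count_cat count_t.
  lia.
set b := drop t k ++ nseq (w - (t + h)) 1.
have below_b : all (fun x => x <= t + h) b by rewrite all_cat below all_nseq; lia.
have -> : ones_to_part h s = take t k ++ (t + h) :: b by [].
have durfee_u : durfee_index h (take t k ++ (t + h) :: b) = t.
  by rewrite -[RHS]size_t durfee_index_cat ?size_t //= leqnn.
split.
- apply/and3P; split.
  + apply: sorted_geq_insert => //; rewrite catA cat_take_drop.
    exact: sorted_geq_cat_ones.
  + rewrite all_cat /= addn_gt0 h_gt0 orbT /b all_cat all_nseq orbT andbT /=.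
    by rewrite -all_cat cat_take_drop.
  + rewrite -sum_s s_split -{2}(cat_take_drop t k) /b.
    by rewrite !sumn_cat /= !sumn_cat !sumn_nseq; apply/eqP; lia.
- by apply/in_rank_setP; exists t; rewrite nth_cat size_t ltnn subnn /=; lia.
- rewrite /part_to_ones durfee_u take_size_cat //.
  rewrite -cat_rcons drop_size_cat ?size_rcons ?size_t //.
  by rewrite -catA -nseqD subnK // catA cat_take_drop -s_split.
Qed.

Lemma part_to_ones_spec n u :
  is_partition n u -> in_rank_set (- h%:Z)%R u ->
  let s := part_to_ones h u in
  [/\ is_partition n s, count (fun x => omega s < x) s + h <= omega s
    & ones_to_part h s = u].
Proof.
move=> /and3P [su u_pos /eqP sum_u] /in_rank_setP [i hit].
have u_i : nth 0 u i = i + h by lia.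
have [u_split size_a above_a below_d] := sorted_geq_split_at su u_i (ltn_addl i h_gt0).
set a := take i u in u_split size_a above_a *; set d := drop i.+1 u in u_split below_d *.
have durfee_u : durfee_index h u = i.
  by rewrite {1}u_split durfee_index_cat size_a //= leqnn.
have a_gt1 : all (fun x => 1 < x) a.
  apply/(all_nthP 0) => j lt_ja; move/(all_nthP 0)/(_ j lt_ja): above_a.
  by rewrite size_a in lt_ja; lia.
have a_pos : all (fun x => 0 < x) a by apply/allP => x /mem_take /(allP u_pos).
have d_pos : all (fun x => 0 < x) d by apply/allP => x /mem_drop /(allP u_pos).
have d_split := split_ones (subseq_sorted geq_trans (drop_subseq _ _) su) d_pos.
set nd := nonones d in d_split.
have -> : part_to_ones h u = a ++ d ++ nseq (i + h) 1 by rewrite /part_to_ones durfee_u.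
have omega_s : omega (a ++ d ++ nseq (i + h) 1) = omega d + (i + h).
  rewrite /omega !count_cat count_nseq (@eq_in_count _ _ pred0) ?count_pred0 ?mul1n //.
  by move=> x /(allP a_gt1) /=; lia.
have nonones_s : nonones (a ++ d ++ nseq (i + h) 1) = a ++ nd.
  by rewrite /nonones !filter_cat filter_nseq cats0 (all_filterP a_gt1).
split => //; rewrite ?omega_s.
- apply/and3P; split.
  + rewrite catA sorted_geq_cat_ones ?all_cat ?a_pos //.
    apply: (subseq_sorted geq_trans _ su); rewrite u_split.
    exact: cat_subseq (subseq_refl a) (subseq_cons d _).
  + by rewrite !all_cat a_pos d_pos all_nseq orbT.
  + by apply/eqP; rewrite -sum_u u_split !sumn_cat /= sumn_nseq; lia.
- rewrite !count_cat count_nseq (@eq_in_count _ _ pred0 d) ?count_pred0; last first.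
    by move=> x /(allP below_d) /=; lia.
  by have := count_size (fun x => omega d + (i + h) < x) a; rewrite size_a /=; lia.
- have below_nd : all (fun x => x <= i + h) nd.
    by apply/allP => x; rewrite mem_filter => /andP[_ /(allP below_d)].
  rewrite /ones_to_part nonones_s omega_s durfee_index_cat ?size_a // addnK.
  by rewrite take_size_cat // drop_size_cat // -d_split.
Qed.

End OnesToPart.

Lemma crank_le_neg (h : nat) s : 0 < h ->
  (crank s <= - h%:Z)%R = (count (fun x => omega s < x) s + h <= omega s).
Proof. by move=> h_gt0; rewrite /crank; case: eqP => [->|/eqP]; lia. Qed.

Lemma pcount_crank_le_neg n (m : int) : (m < 0)%R ->
  pcount n (fun s => crank s <= m)%R = pcount n (in_rank_set m).
Proof.
move=> m_neg; have h_gt0 : 0 < absz m by lia.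
have -> : m = (- (absz m)%:Z)%R by lia.
rewrite (eq_pcount (Q := fun s => count (fun x => omega s < x) s + absz m <= omega s)).
  exact: pcount_bij (ones_to_part_spec h_gt0 (n := n)) (part_to_ones_spec h_gt0 (n := n)).
by move=> s _; apply: crank_le_neg.
Qed.

Local Open Scope ring_scope.

Lemma cumul_pcount (f : int -> nat -> int) (g : seq nat -> int) m n :
  (forall r, r <= m -> f r n = (pcount n (fun s => g s == r))%:Z) ->
  (forall s, is_partition n s -> - n%:Z <= g s) ->
  cumul f m n = (pcount n (fun s => g s <= m))%:Z.
Proof.
move=> f_eq g_ge.
have partial_sum K :
    \sum_(i < K) f (m - i%:Z) n = (pcount n (fun s => m - K%:Z < g s <= m))%:Z.
  elim: K => [|K IHK].
    by rewrite big_ord0 (eq_pcount (Q := pred0)) ?pcount_pred0 // => s _ /=; lia.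
  rewrite big_ord_recr /= IHK f_eq; last by lia.
  by rewrite -PoszD (pcountD n (R := fun s => m - K.+1%:Z < g s <= m)) // => s; lia.
rewrite /cumul; case: ifP => [neg | /negbT nonneg].
  by rewrite (eq_pcount (Q := pred0)) ?pcount_pred0 // => s /g_ge /=; lia.
by rewrite partial_sum; congr Posz; apply: eq_pcount => s /g_ge; lia.
Qed.

Lemma rank_ge n s : is_partition n s -> - n%:Z <= rank s.
Proof. by move/partition_size; rewrite /rank; lia. Qed.

Lemma crank_ge n s : is_partition n s -> - n%:Z <= crank s.
Proof.
move/partition_size; have : (omega s <= size s)%N := count_size _ _.
by rewrite /crank; case: eqP; lia.
Qed.

Lemma pcount1 (P : pred (seq nat)) : pcount 1 P = P [:: 1%N].
Proof.
have part1 s : is_partition 1 s = (s == [:: 1%N]).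
  apply/idP/eqP => [/and3P [_] | -> //]; case: s => [|x [|y t]] //=; last lia.
  by rewrite andbT addn0 => x_gt0 /eqP ->.
rewrite pcountE (permP (_ : perm_eq (partitions 1) [:: [:: 1%N]])) /= ?addn0 //.
by apply: uniq_perm => // [|s]; rewrite ?partitions_uniq // mem_partitions part1 inE.
Qed.

(* The conventional value M(-1, 1) = 1 is the crank of the partition (1). *)
Lemma Mcrank_neg r n : r < 0 -> (0 < n)%N ->
  Mcrank r n = (pcount n (fun s => crank s == r))%:Z.
Proof.
move=> r_neg n_gt0; rewrite /Mcrank; case: eqP => [-> | //]; rewrite pcount1 /crank /=.
by case: (eqVneq r (-1)) => [-> //| ne_r]; rewrite !ifF //; apply/negbTE; lia.
Qed.

Theorem theorem2p1 (m : int) (n : nat) :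
  m < 0 -> (1 <= n)%N ->
  Nle (m + 1) n - Mle m n = qrs (- m - 1) n - prank (m + 2) n.
Proof.
move=> m_neg n_gt0.
have -> : Nle (m + 1) n = (pcount n (fun s => rank s <= m + 1))%:Z.
  by apply: cumul_pcount => [r _ //|]; exact: rank_ge.
have -> : Mle m n = (pcount n (fun s => crank s <= m))%:Z.
  apply: cumul_pcount => [r le_rm|]; last exact: crank_ge.
  by apply: Mcrank_neg => //; lia.
have rank_split : addn (pcount n (fun s => rank s <= m + 1))
    (pcount n (fun s => m + 2 <= rank s)) = pcount n predT.
  by apply: pcountD => s /=; lia.
have rank_set_split : addn (pcount n (fun s => crank s <= m))
    (pcount n (in_rank_set (- m - 1))) = pcount n predT.
  rewrite pcount_crank_le_neg // -pcount_conjugate.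
  rewrite (eq_pcount (Q := predC (in_rank_set (- m - 1)))).
    by apply: pcountD => s /=; case: (in_rank_set _ _).
  by move=> s /and3P [ss s_pos _]; exact: in_rank_set_conjugate.
have -> : prank (m + 2) n = (pcount n (fun s => m + 2 <= rank s))%:Z by [].
have -> : qrs (- m - 1) n = (pcount n (in_rank_set (- m - 1)))%:Z by [].
lia.
Qed.
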